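(* Let $\kappa\ge2$ and let $\psi^+$ be the rooted balanced 4-taxon tree $((a,b),(c,d))$. Then $$d_\kappa(\psi^+)=\left(\frac{\kappa^2+\kappa}{2}\right)^2-\binom{\kappa}{2}-1=\frac{\kappa(\kappa^3+2\kappa^2-\kappa+2)}{4}-1.$$ In particular this differs from the dimension $\frac{\kappa^4+\kappa}{2}-1$ for the rooted 4-taxon caterpillar, so $d_\kappa$ depends on the rooted topology and not only on the number of taxa.
   Context: For a rooted binary topological tree $\psi^+$ on $X$, $d_\kappa(\psi^+)$ is the dimension of the affine space of real $|X|$-way $\kappa\times\cdots\times\kappa$ tensors $P$ (one index per taxon) whose entries sum to 1 and such that for every $Y\subseteq X$ and every 2-clade $\{x,y\}$ of the induced rooted subtree $\psi^+|_Y$, the marginalization $P_Y$ is invariant under exchanging the $x$ and $y$ indices. A 2-clade is a pair of leaves that are exactly the leaf descendants of some vertex. *)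

From HB Require Import structures.
From mathcomp Require Import all_boot all_order all_algebra all_fingroup.
From mathcomp Require Import reals.
Set Implicit Arguments. Unset Strict Implicit. Unset Printing Implicit Defensive.
Import Order.TTheory GRing.Theory Num.Theory.
Local Open Scope ring_scope.

(* A rooted (binary) topological tree on a finite taxon set X is encoded by
   its set of clusters (leaf-descendant sets of its vertices). *)
Definition rtree (X : finType) := {set {set X}}.

(* {x,y} is a 2-clade of the induced rooted subtree psi|_Y: the clusters of
   psi|_Y are exactly the nonempty sets C :&: Y for C a cluster of psi. *)
Definition is_2clade (X : finType) (psi : rtree X) (Y : {set X}) (x y : X) : Prop :=
  x != y /\ exists2 C, C \in psi & C :&: Y = [set x; y].

Definition assign (X : finType) (k : nat) := {ffun X -> 'I_k}.

Definition tensor (R : realType) (X : finType) (k : nat) :=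
  {ffun assign X k -> R^o}.

(* The marginalization P_Y, viewed as a function of the full assignment that
   only depends on the coordinates in Y. *)
Definition marg (R : realType) (X : finType) (k : nat) (Y : {set X})
  (P : tensor R X k) (f : assign X k) : R :=
  \sum_(g : assign X k | [forall z in Y, g z == f z]) P g.

Definition swap_idx (X : finType) (k : nat) (x y : X) (f : assign X k) : assign X k :=
  [ffun z => f (tperm x y z)].

Definition dk_tensors (R : realType) (X : finType) (k : nat) (psi : rtree X)
  (P : tensor R X k) : Prop :=
  (\sum_f P f = 1) /\
  forall (Y : {set X}) (x y : X), is_2clade psi Y x y ->
    forall f, marg Y P f = marg Y P (swap_idx x y f).

Definition affine_dim (R : realType) (V : vectType R) (S : V -> Prop) (d : nat) : Prop :=
  exists P0 : V, exists U : {vspace V},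
    [/\ S P0, (forall P, S P <-> (P - P0) \in U) & \dim U = d].

Definition dk_is (R : realType) (X : finType) (k : nat) (psi : rtree X) (d : nat) : Prop :=
  affine_dim (@dk_tensors R X k psi) d.

Definition ta : 'I_4 := @inord 3 0.
Definition tb : 'I_4 := @inord 3 1.
Definition tc : 'I_4 := @inord 3 2.
Definition td : 'I_4 := @inord 3 3.
Definition balanced4 : rtree 'I_4 :=
  [set [set: 'I_4]; [set ta; tb]; [set tc; td]] :|: [set [set i] | i : 'I_4].

From HB Require Import structures.
From mathcomp Require Import all_boot all_order all_algebra all_fingroup.
From mathcomp Require Import reals.
From mathcomp Require Import ring zify.

(* The 2-clades of the induced subtrees are cut out of the clusters of the
   tree: the cherries {a,b}, {c,d} and the root.  Those coming from a cherry
   merely ask the tensor to be invariant under the corresponding index swap;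
   those coming from the root ask every two-way marginal to be symmetric, and
   under the cherry invariances this reduces to the (a,c)-marginal alone
   (dk_tensorsP).  The defining set of d_kappa is therefore the level set
   {mass = 1} inside U = (cherry-invariant tensors) /\ ker(asym_ac), where
   asym_ac takes the part of the (a,c)-marginal above the diagonal minus its
   transpose.  Cherry-invariant tensors are the functions of a pair of
   2-multisets of indices (dimension ((k^2+k)/2)^2), and asym_ac maps them onto
   all antisymmetric arrays (dimension C(k,2)); a point mass on a constant
   assignment shows the mass form is nonzero on U. *)

Set Implicit Arguments. Unset Strict Implicit. Unset Printing Implicit Defensive.
Import Order.TTheory GRing.Theory Num.Theory.

Lemma sum_ord_ltn (k j : nat) : (j <= k)%N -> (\sum_(i < k) (i < j : nat) = j)%N.
Proof.
move=> le_jk; rewrite -[RHS]card_ord -sum1_card (big_ord_widen _ (fun=> 1%N) le_jk) [RHS]big_mkcond.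
by apply: eq_bigr => i _; case: (i < j)%N.
Qed.

Section PairCounting.
Variable k : nat.

(* Strictly increasing and weakly increasing pairs of indices: the
   unordered pairs of distinct indices, resp. the 2-multisets of indices. *)
Definition strict_pair := {p : 'I_k * 'I_k | (p.1 < p.2)%N}.
Definition sorted_pair := {p : 'I_k * 'I_k | (p.1 <= p.2)%N}.

Lemma card_strict_pair : #|{: strict_pair}| = 'C(k, 2).
Proof.
rewrite card_sig -sum1_card big_mkcond /= -(pair_big xpredT xpredT
  (fun i j : 'I_k => if (i < j)%N then 1%N else 0%N)) exchange_big /=.
rewrite (eq_bigr (fun j : 'I_k => val j)) => [|j _].
  by rewrite -(big_mkord xpredT id) bin2_sum.
by rewrite -[RHS](sum_ord_ltn (ltnW (ltn_ord j))); apply: eq_bigr => i _; case: ltnP.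
Qed.

Lemma card_sorted_pair : #|{: sorted_pair}| = ('C(k, 2) + k)%N.
Proof.
rewrite card_sig -sum1_card big_mkcond /= -(pair_big xpredT xpredT
  (fun i j : 'I_k => if (i <= j)%N then 1%N else 0%N)) exchange_big /=.
rewrite (eq_bigr (fun j : 'I_k => val j + 1)%N) => [|j _].
  by rewrite big_split /= sum1_card card_ord -(big_mkord xpredT id) bin2_sum.
rewrite addn1 -[RHS](sum_ord_ltn (ltn_ord j)).
by apply: eq_bigr => i _; rewrite ltnS; case: leqP.
Qed.

End PairCounting.

Lemma dimension_formulas (k : nat) : (2 <= k)%N ->
  [/\ ((k ^ 2 + k) %/ 2 = 'C(k, 2) + k)%N,
      ((((k ^ 2 + k) %/ 2) ^ 2 - 'C(k, 2)) - 1 =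
         (k * (k ^ 3 + 2 * k ^ 2 - k + 2)) %/ 4 - 1)%N &
      ((((k ^ 2 + k) %/ 2) ^ 2 - 'C(k, 2)) - 1 <> (k ^ 4 + k) %/ 2 - 1)%N].
Proof.
move=> k_ge2; have two_bin : (2 * 'C(k, 2) = k * k.-1)%N.
  by rewrite bin2 -divn2 mulnC divnK // dvdn2; case: (k) => //= n; rewrite oddM /= andNb.
move: ('C(k, 2)) two_bin => m two_bin.
have half_eq : ((k ^ 2 + k) %/ 2 = m + k)%N.
  have -> : (k ^ 2 + k = 2 * (m + k))%N.
    by case: k k_ge2 two_bin => // k' _ /= two_bin; rewrite mulnDr two_bin; lia.
  by rewrite mulKn.
have poly_eq : (k * (k ^ 3 + 2 * k ^ 2 - k + 2) = 4 * ((m + k) ^ 2 - m))%N.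
  by case: k k_ge2 two_bin {half_eq} => // k' _ /= two_bin; nia.
rewrite half_eq poly_eq mulKn //; split => //.
have half_ub : (k ^ 4 + k <= 2 * ((k ^ 4 + k) %/ 2) + 1)%N.
  by have := divn_eq (k ^ 4 + k) 2; have := @ltn_pmod (k ^ 4 + k) 2 isT; lia.
by case: k k_ge2 two_bin {half_eq} poly_eq half_ub => // k' k_ge2 /= two_bin poly_eq half_ub; nia.
Qed.

Local Open Scope ring_scope.

Section Marginals.
Variables (R : realType) (X : finType) (k : nat).
Local Notation tensorX := (tensor R X k).

Definition marg2 (x y : X) (P : tensorX) (i j : 'I_k) : R :=
  \sum_(g : assign X k | (g x == i) && (g y == j)) P g.

Definition swap_invariant (u v : X) (P : tensorX) : Prop :=
  forall g, P (swap_idx u v g) = P g.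

Definition marg2_symmetric (x y : X) (P : tensorX) : Prop :=
  forall i j, marg2 x y P i j = marg2 x y P j i.

Lemma swap_idxE (x y z : X) (f : assign X k) : swap_idx x y f z = f (tperm x y z).
Proof. by rewrite ffunE. Qed.

Lemma swap_idxK (x y : X) : involutive (@swap_idx X k x y).
Proof. by move=> f; apply/ffunP => z; rewrite !swap_idxE tpermK. Qed.

Lemma swap_idxC (x y : X) : @swap_idx X k x y =1 swap_idx y x.
Proof. by move=> f; rewrite /swap_idx tpermC. Qed.

Lemma marg2C (x y : X) (P : tensorX) i j : marg2 x y P i j = marg2 y x P j i.
Proof. by apply: eq_bigl => g; rewrite andbC. Qed.

Lemma marg2_symmetricC (x y : X) (P : tensorX) :
  marg2_symmetric x y P -> marg2_symmetric y x P.
Proof. by move=> sym_xy i j; rewrite marg2C sym_xy marg2C. Qed.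

Lemma marg2_linear (x y : X) (a : R) (P Q : tensorX) i j :
  marg2 x y (a *: P + Q) i j = a * marg2 x y P i j + marg2 x y Q i j.
Proof. by rewrite /marg2 mulr_sumr -big_split; apply: eq_bigr => g _; rewrite !ffunE. Qed.

Lemma marg_setT (P : tensorX) f : marg [set: X] P f = P f.
Proof.
rewrite /marg (big_pred1 f) // => g /=; apply/forall_inP/eqP => [agree|-> //].
by apply/ffunP => z; apply/eqP/agree; rewrite inE.
Qed.

Lemma marg_pair (x y : X) (P : tensorX) f :
  marg [set x; y] P f = marg2 x y P (f x) (f y).
Proof.
apply: eq_bigl => g; apply/forall_inP/andP => [agree|[/eqP gx /eqP gy] z].
  by split; apply: agree; rewrite !inE eqxx ?orbT.
by rewrite !inE => /orP[] /eqP ->; rewrite ?gx ?gy.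
Qed.

Lemma pair_exchangeP (x y : X) (P : tensorX) : x != y ->
  (forall f, marg [set x; y] P f = marg [set x; y] P (swap_idx x y f)) <->
  marg2_symmetric x y P.
Proof.
move=> neq_xy; split => [exch i j|sym_xy f]; last first.
  by rewrite !marg_pair !swap_idxE tpermL tpermR.
pose f : assign X k := [ffun z => if z == x then i else j].
have := exch f; rewrite !marg_pair !swap_idxE tpermL tpermR /f !ffunE eqxx.
by rewrite eq_sym (negbTE neq_xy).
Qed.

Lemma marg2_tperm (u v x y : X) (P : tensorX) i j : swap_invariant u v P ->
  marg2 x y P i j = marg2 (tperm u v x) (tperm u v y) P i j.
Proof.
move=> inv_uv; rewrite /marg2 (reindex_inj (inv_inj (@swap_idxK u v))) /=.
by apply: eq_big => [g|g _]; rewrite ?inv_uv // !swap_idxE.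
Qed.

Lemma marg2_symmetric_tperm (u v x y : X) (P : tensorX) : swap_invariant u v P ->
  marg2_symmetric (tperm u v x) (tperm u v y) P -> marg2_symmetric x y P.
Proof.
move=> inv_uv sym i j.
by rewrite [LHS](marg2_tperm _ _ _ _ inv_uv) [RHS](marg2_tperm _ _ _ _ inv_uv).
Qed.

Lemma swap_invariant_marg2_symmetric (u v : X) (P : tensorX) :
  swap_invariant u v P -> marg2_symmetric u v P.
Proof. by move=> inv_uv i j; rewrite (marg2_tperm u v i j inv_uv) tpermL tpermR marg2C. Qed.

Lemma marg_swap_invariant (u v : X) (Y : {set X}) (P : tensorX) f :
  u \in Y -> v \in Y -> swap_invariant u v P ->
  marg Y P (swap_idx u v f) = marg Y P f.
Proof.
move=> uY vY inv_uv; rewrite /marg (reindex_inj (inv_inj (@swap_idxK u v))) /=.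
have tpermY w : w \in Y -> tperm u v w \in Y by case: tpermP => // ->.
apply: eq_big => [g|g _]; last by rewrite inv_uv.
apply/forall_inP/forall_inP => agree z zY.
  by have := agree _ (tpermY _ zY); rewrite !swap_idxE tpermK.
by rewrite !swap_idxE; apply/agree/tpermY.
Qed.

Lemma cherry_exchange (u v : X) (Y : {set X}) (x y : X) (P : tensorX) :
  swap_invariant u v P -> [set u; v] :&: Y = [set x; y] -> x != y ->
  forall f, marg Y P f = marg Y P (swap_idx x y f).
Proof.
move=> inv_uv cutY neq_xy f.
have /setIP[xuv xY] : x \in [set u; v] :&: Y by rewrite cutY !inE eqxx.
have /setIP[yuv yY] : y \in [set u; v] :&: Y by rewrite cutY !inE eqxx orbT.
move: xuv yuv neq_xy xY yY; rewrite !inE.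
case/orP => /eqP -> /orP[] /eqP ->; rewrite ?eqxx // => _ uY vY.
  by rewrite (marg_swap_invariant _ uY vY inv_uv).
by rewrite swap_idxC (marg_swap_invariant _ vY uY inv_uv).
Qed.

End Marginals.

Lemma taxonP (z : 'I_4) : [\/ z = ta, z = tb, z = tc | z = td].
Proof.
by case: z => [[|[|[|[|n]]]] lt_z4] //; [apply: Or41 | apply: Or42 | apply: Or43 | apply: Or44];
  apply/val_inj; rewrite /= inordK.
Qed.

Lemma taxa_neq :
  ((ta == tb) = false) * ((ta == tc) = false) * ((ta == td) = false) *
  ((tb == ta) = false) * ((tb == tc) = false) * ((tb == td) = false) *
  ((tc == ta) = false) * ((tc == tb) = false) * ((tc == td) = false) *
  ((td == ta) = false) * ((td == tb) = false) * ((td == tc) = false).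
Proof. by rewrite -!val_eqE /= !inordK. Qed.

Lemma tperm_other_cherry :
  (tperm ta tb tc = tc) * (tperm ta tb td = td) *
  (tperm tc td ta = ta) * (tperm tc td tb = tb).
Proof. by rewrite !tpermD ?taxa_neq. Qed.

Lemma balanced4_clusterP (C : {set 'I_4}) : C \in balanced4 ->
  [\/ C = [set: 'I_4], C = [set ta; tb], C = [set tc; td] | exists i, C = [set i]].
Proof.
rewrite !inE -!orbA => /or4P[/eqP->|/eqP->|/eqP->|/imsetP[i _ ->]]; first by constructor.
- by constructor.
- by constructor.
- by apply: Or44; exists i.
Qed.

Section BalancedTensors.
Variables (R : realType) (k : nat).
Local Notation tensor4 := (tensor R 'I_4 k).

Lemma marg2_symmetric_all (P : tensor4) :
  swap_invariant ta tb P -> swap_invariant tc td P -> marg2_symmetric ta tc P ->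
  forall x y, x != y -> marg2_symmetric x y P.
Proof.
move=> inv_ab inv_cd sym_ac.
have sym_ab := swap_invariant_marg2_symmetric inv_ab.
have sym_cd := swap_invariant_marg2_symmetric inv_cd.
have sym_bc : marg2_symmetric tb tc P.
  by apply: (marg2_symmetric_tperm inv_ab); rewrite tpermR tperm_other_cherry.
have sym_ad : marg2_symmetric ta td P.
  by apply: (marg2_symmetric_tperm inv_cd); rewrite tpermR tperm_other_cherry.
have sym_bd : marg2_symmetric tb td P.
  by apply: (marg2_symmetric_tperm inv_ab); rewrite tpermR tperm_other_cherry.
move=> x y; case: (taxonP x) => ->; case: (taxonP y) => ->; rewrite ?eqxx ?taxa_neq // => _.
all: by [| apply: marg2_symmetricC].
Qed.

Lemma dk_tensorsP (P : tensor4) : dk_tensors balanced4 P <->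
  [/\ \sum_f P f = 1, swap_invariant ta tb P, swap_invariant tc td P &
      marg2_symmetric ta tc P].
Proof.
have root_in : [set: 'I_4] \in balanced4 by rewrite /balanced4 !inE eqxx.
have ab_in : [set ta; tb] \in balanced4 by rewrite /balanced4 !inE eqxx ?orbT.
have cd_in : [set tc; td] \in balanced4 by rewrite /balanced4 !inE eqxx ?orbT.
split=> [[mass exch]|[mass inv_ab inv_cd sym_ac]].
  split=> //.
  - move=> g; have := exch [set: 'I_4] ta tb _ g; rewrite !marg_setT => -> //.
    by split; [rewrite taxa_neq | exists [set ta; tb]; rewrite ?setIT].
  - move=> g; have := exch [set: 'I_4] tc td _ g; rewrite !marg_setT => -> //.
    by split; [rewrite taxa_neq | exists [set tc; td]; rewrite ?setIT].
  - apply/pair_exchangeP; first by rewrite taxa_neq.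
    apply: exch; split; first by rewrite taxa_neq.
    by exists [set: 'I_4]; rewrite ?setTI.
split=> // Y x y [neq_xy [C /balanced4_clusterP cluster_C cutY]].
case: cluster_C => [|||[i]] defC; subst C.
- rewrite setTI in cutY; subst Y.
  exact/(pair_exchangeP _ neq_xy)/marg2_symmetric_all.
- exact: cherry_exchange inv_ab cutY neq_xy.
- exact: cherry_exchange inv_cd cutY neq_xy.
- have /setIP[/set1P x_i _] : x \in [set i] :&: Y by rewrite cutY !inE eqxx.
  have /setIP[/set1P y_i _] : y \in [set i] :&: Y by rewrite cutY !inE eqxx orbT.
  by rewrite x_i y_i eqxx in neq_xy.
Qed.

End BalancedTensors.

Section CherryInvariants.
Variables (R : realType) (k : nat).
Local Notation assign4 := (assign 'I_4 k).
Local Notation tensor4 := (tensor R 'I_4 k).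

Definition sort2_val (i j : 'I_k) : 'I_k * 'I_k := if (i <= j)%N then (i, j) else (j, i).

Lemma sort2_val_sorted (i j : 'I_k) : ((sort2_val i j).1 <= (sort2_val i j).2)%N.
Proof. by rewrite /sort2_val; case: (leqP i j) => [|/ltnW]. Qed.

Definition sort2 (i j : 'I_k) : sorted_pair k := exist _ (sort2_val i j) (sort2_val_sorted i j).

Lemma sort2C (i j : 'I_k) : sort2 i j = sort2 j i.
Proof.
apply/val_inj; rewrite /= /sort2_val.
case: (leqP i j) => [le_ij|lt_ji]; case: (leqP j i) => [le_ji|lt_ij] //.
  suff -> : i = j by [].
  by apply/val_inj/anti_leq; rewrite le_ij le_ji.
by have := ltn_trans lt_ij lt_ji; rewrite ltnn.
Qed.

Definition assign_abcd (xa xb xc xd : 'I_k) : assign4 :=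
  [ffun z => if z == ta then xa else if z == tb then xb else if z == tc then xc else xd].

Lemma assign_abcdE xa xb xc xd :
  (assign_abcd xa xb xc xd ta = xa) * (assign_abcd xa xb xc xd tb = xb) *
  (assign_abcd xa xb xc xd tc = xc) * (assign_abcd xa xb xc xd td = xd).
Proof. by rewrite !ffunE !eqxx !taxa_neq. Qed.

Lemma eq_assign4 (f g : assign4) :
  f ta = g ta -> f tb = g tb -> f tc = g tc -> f td = g td -> f = g.
Proof. by move=> ea eb ec ed; apply/ffunP => z; case: (taxonP z) => ->. Qed.

(* The orbit invariant of an assignment under the two cherry swaps. *)
Definition cherry_key (f : assign4) : sorted_pair k * sorted_pair k :=
  (sort2 (f ta) (f tb), sort2 (f tc) (f td)).

Definition key_assign (x : sorted_pair k * sorted_pair k) : assign4 :=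
  assign_abcd (val x.1).1 (val x.1).2 (val x.2).1 (val x.2).2.

Lemma key_assignK : cancel key_assign cherry_key.
Proof.
case=> [[[i1 j1] le1] [[i2 j2] le2]]; rewrite /cherry_key /key_assign /= !assign_abcdE.
by congr pair; apply/val_inj; rewrite /= /sort2_val /= ?le1 ?le2.
Qed.

Lemma cherry_key_swap_ab f : cherry_key (swap_idx ta tb f) = cherry_key f.
Proof.
by rewrite /cherry_key !swap_idxE tpermL tpermR !tperm_other_cherry sort2C.
Qed.

Lemma cherry_key_swap_cd f : cherry_key (swap_idx tc td f) = cherry_key f.
Proof.
by rewrite /cherry_key !swap_idxE tpermL tpermR !tperm_other_cherry [sort2 (f td) _]sort2C.
Qed.

Lemma cherry_invariant_key (P : tensor4) f :
  swap_invariant ta tb P -> swap_invariant tc td P -> P (key_assign (cherry_key f)) = P f.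
Proof.
move=> inv_ab inv_cd; rewrite /key_assign /cherry_key /= /sort2_val.
have swap_simpl := (swap_idxE, tpermL, tpermR, tperm_other_cherry, assign_abcdE).
case: (leqP (f ta) (f tb)) => _; case: (leqP (f tc) (f td)) => _ /=.
- by congr (P _); apply: eq_assign4; rewrite !assign_abcdE.
- by rewrite -(inv_cd f); congr (P _); apply: eq_assign4; rewrite !swap_simpl.
- by rewrite -(inv_ab f); congr (P _); apply: eq_assign4; rewrite !swap_simpl.
- rewrite -(inv_ab f) -(inv_cd (swap_idx ta tb f)).
  by congr (P _); apply: eq_assign4; rewrite !swap_simpl.
Qed.

Definition lift_key (h : {ffun sorted_pair k * sorted_pair k -> R^o}) : tensor4 :=
  [ffun f => h (cherry_key f)].

Lemma lift_key_is_linear : linear lift_key.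
Proof. by move=> a u v; apply/ffunP => f; rewrite !ffunE. Qed.

HB.instance Definition _ := GRing.isLinear.Build R
  {ffun sorted_pair k * sorted_pair k -> R^o} tensor4 *:%R lift_key lift_key_is_linear.

Definition liftL := linfun lift_key.

Lemma mem_cherry_invariant (P : tensor4) :
  P \in limg liftL <-> swap_invariant ta tb P /\ swap_invariant tc td P.
Proof.
split=> [/memv_imgP[h _ ->]|[inv_ab inv_cd]].
  by rewrite lfunE; split=> g; rewrite !ffunE ?cherry_key_swap_ab ?cherry_key_swap_cd.
apply/memv_imgP; exists [ffun x => P (key_assign x)]; first exact: memvf.
by apply/ffunP => f; rewrite lfunE !ffunE cherry_invariant_key.
Qed.

Lemma dim_cherry_invariant : \dim (limg liftL) = (#|{: sorted_pair k}| ^ 2)%N.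
Proof.
have inj_lift : lker liftL == 0%VS.
  apply/lker0P => u v eq_uv; apply/ffunP => x.
  by have := congr1 (fun P : tensor4 => P (key_assign x)) eq_uv; rewrite !lfunE !ffunE key_assignK.
rewrite limg_dim_eq ?(eqP inj_lift) ?capv0 // dimvf /dim /= muln1 card_prod.
by rewrite expnS expn1.
Qed.

End CherryInvariants.

Section ACSymmetry.
Variables (R : realType) (k : nat).
Local Notation tensor4 := (tensor R 'I_4 k).

Definition asym_ac (P : tensor4) : {ffun strict_pair k -> R^o} :=
  [ffun p => marg2 ta tc P (val p).1 (val p).2 - marg2 ta tc P (val p).2 (val p).1].

Lemma asym_ac_is_linear : linear asym_ac.
Proof.
by move=> a u v; apply/ffunP => p; rewrite !ffunE !marg2_linear /GRing.scale /=; ring.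
Qed.

HB.instance Definition _ := GRing.isLinear.Build R tensor4 {ffun strict_pair k -> R^o}
  *:%R asym_ac asym_ac_is_linear.

Definition asymL := linfun asym_ac.

Lemma asym_ac_eq0P (P : tensor4) : asym_ac P = 0 <-> marg2_symmetric ta tc P.
Proof.
split=> [asym0 i j|sym_ac]; last by apply/ffunP => p; rewrite !ffunE sym_ac subrr.
have asym0p (p : strict_pair k) : marg2 ta tc P (val p).1 (val p).2 =
    marg2 ta tc P (val p).2 (val p).1.
  apply/eqP; rewrite -subr_eq0.
  by have := congr1 (fun A : {ffun strict_pair k -> R^o} => A p) asym0; rewrite !ffunE => ->.
case: (ltngtP i j) => [lt_ij|lt_ji|/val_inj-> //].
  exact: (asym0p (exist _ (i, j) lt_ij)).
exact/esym/(asym0p (exist _ (j, i) lt_ji)).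
Qed.

Definition upper (h : {ffun strict_pair k -> R^o}) (i j : 'I_k) : R :=
  if insub (i, j) is Some p then h p else 0.

Definition upper_tensor (h : {ffun strict_pair k -> R^o}) : tensor4 :=
  [ffun f : assign 'I_4 k => if (f tb == f ta) && (f td == f tc) then upper h (f ta) (f tc) else 0].

Lemma marg2_upper_tensor h i j : marg2 ta tc (upper_tensor h) i j = upper h i j.
Proof.
rewrite /marg2 (bigD1 (assign_abcd i i j j)) /=; last by rewrite !assign_abcdE !eqxx.
rewrite ffunE !assign_abcdE !eqxx /= big1 ?addr0 // => g /andP[/andP[/eqP gi /eqP gj] ne_g].
rewrite ffunE; case: ifP => // /andP[/eqP gb /eqP gd].
suff g_eq : g = assign_abcd i i j j by rewrite g_eq eqxx in ne_g.
by apply: eq_assign4; rewrite !assign_abcdE ?gb ?gd.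
Qed.

Lemma upper_tensor_invariant h :
  swap_invariant ta tb (upper_tensor h) /\ swap_invariant tc td (upper_tensor h).
Proof.
split=> g; rewrite !ffunE ?tpermL ?tpermR ?tperm_other_cherry.
  by case: (g tb =P g ta) => [->|/eqP ne]; rewrite ?eqxx // eq_sym (negbTE ne).
by case: (g td =P g tc) => [->|/eqP ne]; rewrite ?eqxx // [g tc == _]eq_sym (negbTE ne) !andbF.
Qed.

Lemma asym_ac_upper_tensor h : asym_ac (upper_tensor h) = h.
Proof.
apply/ffunP => p; rewrite !ffunE !marg2_upper_tensor /upper -surjective_pairing valK.
case: insubP => [q lt_q _|_]; last by rewrite subr0.
by have := ltn_trans (valP p) lt_q; rewrite ltnn.
Qed.

Lemma asym_ac_onto : (asymL @: limg (liftL R k))%VS = fullv.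
Proof.
apply/eqP; rewrite eqEsubv subvf /=; apply/subvP => h _.
have /mem_cherry_invariant := upper_tensor_invariant h.
by move/(memv_img asymL); rewrite lfunE /= asym_ac_upper_tensor.
Qed.

Definition mass (P : tensor4) : R^o := \sum_f P f.

Lemma mass_is_linear : linear mass.
Proof.
move=> a u v; rewrite /mass /GRing.scale /= mulr_sumr -big_split.
by apply: eq_bigr => f _; rewrite !ffunE.
Qed.

HB.instance Definition _ := GRing.isLinear.Build R tensor4 R^o *:%R mass mass_is_linear.

Definition massL := linfun mass.

End ACSymmetry.

Lemma affine_dim_level_set (R : realType) (V : vectType R) (U : {vspace V})
    (s : 'Hom(V, R^o)) (S : V -> Prop) (P0 : V) :
  P0 \in U -> s P0 = 1 -> (forall P, S P <-> P \in U /\ s P = 1) ->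
  affine_dim S (\dim U - 1).
Proof.
move=> P0U sP0 defS; exists P0, (U :&: lker s)%VS; split; first exact/defS.
  move=> P; rewrite defS memv_cap memv_ker linearB /= sP0 subr_eq0.
  have -> : (P - P0 \in U) = (P \in U).
    apply/idP/idP => [PU|PU]; last exact: memvB.
    by rewrite -(subrK P0 P) memvD.
  by split=> [[-> /eqP->]|/andP[-> /eqP->]].
have dim_img : \dim (s @: U) = 1%N.
  apply/eqP; rewrite eqn_leq; apply/andP; split.
    by have := dimvS (subvf (s @: U)); rewrite dimvf.
  rewrite lt0n dimv_eq0; apply/negP => /eqP img0.
  by have := memv_img s P0U; rewrite img0 memv0 sP0 oner_eq0.
by rewrite -(limg_ker_dim s U) dim_img addnK.
Qed.

Lemma point_mass_swap_invariant (R : realType) (X : finType) (k : nat) (i : 'I_k) (u v : X) :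
  swap_invariant u v ([ffun f => (f == [ffun=> i])%:R] : tensor R X k).
Proof.
have swap_const : swap_idx u v [ffun=> i] = [ffun=> i] :> assign X k.
  by apply/ffunP => z; rewrite swap_idxE !ffunE.
by move=> g; rewrite !ffunE -{1}swap_const (can_eq (swap_idxK u v)).
Qed.

(* d_kappa of ((a,b),(c,d)) as a count of pairs: cherry-invariant tensors,
   minus the constraints of a symmetric (a,c)-marginal, minus the mass. *)
Lemma dk_balanced4 (R : realType) (k : nat) : (0 < k)%N ->
  dk_is R k balanced4 (#|{: sorted_pair k}| ^ 2 - 'C(k, 2) - 1).
Proof.
move=> k_gt0; pose c0 : assign 'I_4 k := [ffun=> Ordinal k_gt0].
pose P0 : tensor R 'I_4 k := [ffun f => (f == c0)%:R].
have inv_P0 u v : swap_invariant u v P0 := point_mass_swap_invariant _ _ u v.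
have mass_P0 : massL R k P0 = 1.
  rewrite lfunE /= /mass (bigD1 c0) //= ffunE eqxx big1 ?addr0 // => g.
  by rewrite ffunE => /negbTE->.
set U := (limg (liftL R k) :&: lker (asymL R k))%VS.
have memU P : P \in U <->
    [/\ swap_invariant ta tb P, swap_invariant tc td P & marg2_symmetric ta tc P].
  rewrite memv_cap memv_ker lfunE /=; split.
    by case/andP=> /mem_cherry_invariant[inv_ab inv_cd] /eqP/asym_ac_eq0P.
  case=> inv_ab inv_cd /asym_ac_eq0P->; rewrite eqxx andbT.
  exact/mem_cherry_invariant.
have dimU : \dim U = (#|{: sorted_pair k}| ^ 2 - 'C(k, 2))%N.
  have := limg_ker_dim (asymL R k) (limg (liftL R k)).
  rewrite asym_ac_onto dimvf /dim /= muln1 card_strict_pair dim_cherry_invariant.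
  by move=> <-; rewrite addnK.
rewrite -dimU; apply: (affine_dim_level_set (s := massL R k) (P0 := P0)) => //.
  by apply/memU; split; rewrite ?inv_P0 //; apply: swap_invariant_marg2_symmetric.
move=> P; rewrite dk_tensorsP lfunE /=.
split=> [[mass1 inv_ab inv_cd sym_ac]|[/memU[inv_ab inv_cd sym_ac] mass1]] //.
by split=> //; apply/memU.
Qed.

Theorem mainTheorem9 (R : realType) (k : nat) (hk : (2 <= k)%N) :
  dk_is R k balanced4 ((((k ^ 2 + k) %/ 2) ^ 2 - 'C(k, 2)) - 1)%N /\
  ((((k ^ 2 + k) %/ 2) ^ 2 - 'C(k, 2)) - 1 =
     (k * (k ^ 3 + 2 * k ^ 2 - k + 2)) %/ 4 - 1)%N /\
  ((((k ^ 2 + k) %/ 2) ^ 2 - 'C(k, 2)) - 1 <> (k ^ 4 + k) %/ 2 - 1)%N.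
Proof.
have [half_eq quartic_eq caterpillar_neq] := dimension_formulas hk.
split; last by split.
rewrite half_eq -card_sorted_pair; exact/dk_balanced4/ltnW.
Qed.
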